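(* Let $\mathfrak{sl}_2\langle\langle\lambda\rangle\rangle=\mathbb C[[\lambda^2]]h+\lambda\mathbb C[[\lambda^2]]e+\lambda\mathbb C[[\lambda^2]]f\subset\mathfrak{sl}_2[[\lambda]]$ (a Lie subalgebra) and $\mathfrak{sl}_2\langle\langle\lambda\rangle\rangle^L=\mathfrak{sl}_2\langle\langle\lambda\rangle\rangle\cap\lambda^L\mathfrak{sl}_2[[\lambda]]$ for $L\ge0$. Then there is a Lie algebra isomorphism $\widehat{\mathfrak{OA}}_1\cong\mathfrak{sl}_2\langle\langle\lambda\rangle\rangle$ which maps $\widehat{\mathfrak{OA}}_1^L$ onto $\mathfrak{sl}_2\langle\langle\lambda\rangle\rangle^L$ for every $L\ge0$, and hence induces isomorphisms $\mathfrak{OA}_{1,L}\cong\mathfrak{sl}_2\langle\langle\lambda\rangle\rangle/\mathfrak{sl}_2\langle\langle\lambda\rangle\rangle^L$ for all $L\ge0$.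
   Context: Work over $\mathbb C$. $\mathfrak{sl}_2$ has basis $e,f,h$ with $[e,f]=h$, $[h,e]=2e$, $[h,f]=-2f$; $\mathfrak{sl}_2[[\lambda]]=\mathbb C[[\lambda]]\otimes\mathfrak{sl}_2$. The Onsager algebra is the Lie subalgebra $\mathfrak{OA}=\{p(t)e+p(t^{-1})f+q(t)h:\ p,q\in\mathbb C[t,t^{-1}],\ q(t^{-1})=-q(t)\}$ of the loop algebra $\mathbb C[t,t^{-1}]\otimes\mathfrak{sl}_2$ (bracket $[px,qy]=pq[x,y]$). $\mathfrak I_{(t-1)^L}=\{p(t)e+p(t^{-1})f+q(t)h\in\mathfrak{OA}: p,q\in(t-1)^L\mathbb C[t,t^{-1}]\}$. For $L\ge1$, $\mathfrak{OA}_{1,L}=\mathfrak{OA}/\mathfrak I_{(t-1)^L}$, $\mathfrak{OA}_{1,0}=0$; for $L\ge K$ there are canonical surjections $\mathfrak{OA}_{1,L}\to\mathfrak{OA}_{1,K}$. $\widehat{\mathfrak{OA}}_1=\varprojlim_L\mathfrak{OA}_{1,L}$, $\psi_{1,L}:\widehat{\mathfrak{OA}}_1\to\mathfrak{OA}_{1,L}$ the canonical map, and $\widehat{\mathfrak{OA}}_1^L=\ker\psi_{1,L}$. *)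

From HB Require Import structures.
From mathcomp Require Import all_boot all_order all_algebra.
From mathcomp Require Import finmap.
From mathcomp Require Export reals complex.

Set Implicit Arguments.
Unset Strict Implicit.
Unset Printing Implicit Defensive.

Import Order.TTheory GRing.Theory Num.Theory.
Local Open Scope ring_scope.

Section OnsagerDefs.
Variable K : fieldType.

(* A Laurent polynomial is its finitely supported coefficient function int -> K:
   a = \sum_n a(n) t^n. *)
Definition laurent := {fsfun int -> K with 0}.

Definition ladd (a b : laurent) : laurent :=
  [fsfun n in (finsupp a `|` finsupp b)%fset => a n + b n | 0].
Definition lopp (a : laurent) : laurent :=
  [fsfun n in finsupp a => - a n | 0].
Definition lscale (c : K) (a : laurent) : laurent :=
  [fsfun n in finsupp a => c * a n | 0].
Definition lmul (a b : laurent) : laurent :=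
  [fsfun n in [fset (i + j)%R | i in finsupp a, j in finsupp b]%fset =>
     \sum_(i <- finsupp a) a i * b (n - i) | 0].
Definition linv (a : laurent) : laurent :=
  [fsfun n in [fset (- i)%R | i in finsupp a]%fset => a (- n) | 0].
Definition lmono (c : K) (k : int) : laurent := [fsfun n in [fset k]%fset => c | 0].
Definition lone : laurent := lmono 1 0.
Definition lpow (a : laurent) (L : nat) : laurent := iter L (lmul a) lone.
Definition ltm1 : laurent := ladd (lmono 1 1) (lmono (-1) 0).

(* Loop x stands for (le x) e + (lf x) f + (lh x) h *)
Record loop := Loop { le : laurent; lf : laurent; lh : laurent }.

Definition loop_add (x y : loop) : loop :=
  Loop (ladd (le x) (le y)) (ladd (lf x) (lf y)) (ladd (lh x) (lh y)).
Definition loop_opp (x : loop) : loop := Loop (lopp (le x)) (lopp (lf x)) (lopp (lh x)).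
Definition loop_sub (x y : loop) : loop := loop_add x (loop_opp y).
Definition loop_scale (c : K) (x : loop) : loop :=
  Loop (lscale c (le x)) (lscale c (lf x)) (lscale c (lh x)).
(* bracket [px,qy] = pq[x,y] with [e,f]=h, [h,e]=2e, [h,f]=-2f *)
Definition loop_br (x y : loop) : loop :=
  Loop (lscale 2 (ladd (lmul (lh x) (le y)) (lopp (lmul (le x) (lh y)))))
       (lscale 2 (ladd (lmul (lf x) (lh y)) (lopp (lmul (lh x) (lf y)))))
       (ladd (lmul (le x) (lf y)) (lopp (lmul (lf x) (le y)))).

Definition OA (x : loop) : Prop :=
  exists p q : laurent, linv q = lopp q /\ x = Loop p (linv p) q.

Definition OA_ideal (L : nat) (x : loop) : Prop :=
  exists p q : laurent,
    [/\ linv q = lopp q, x = Loop p (linv p) q,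
        exists r, p = lmul (lpow ltm1 L) r & exists s, q = lmul (lpow ltm1 L) s].

(* An element of the inverse limit is a compatible family (x_L mod I_L)_L; we
   represent it by a family of representatives x : nat -> loop in OA with
   x_L - x_K in I_K for K <= L; two families represent the same element iff
   x_L - y_L \in I_L for all L.  OA_{1,0} = 0 is accounted for by I_0 = OA. *)
Definition hatOA (x : nat -> loop) : Prop :=
  (forall L, OA (x L)) /\
  (forall K L, (K <= L)%N -> OA_ideal K (loop_sub (x L) (x K))).
Definition hat_eq (x y : nat -> loop) : Prop :=
  forall L, OA_ideal L (loop_sub (x L) (y L)).
Definition hat_add (x y : nat -> loop) : nat -> loop := fun L => loop_add (x L) (y L).
Definition hat_scale (c : K) (x : nat -> loop) : nat -> loop := fun L => loop_scale c (x L).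
Definition hat_br (x y : nat -> loop) : nat -> loop := fun L => loop_br (x L) (y L).
(* kernel of psi_{1,L} : x_L = 0 in OA_{1,L} *)
Definition ker_psi (L : nat) (x : nat -> loop) : Prop := OA_ideal L (x L).

Definition pser := nat -> K.
Definition padd (a b : pser) : pser := fun n => a n + b n.
Definition popp (a : pser) : pser := fun n => - a n.
Definition pscale (c : K) (a : pser) : pser := fun n => c * a n.
Definition pmul (a b : pser) : pser := fun n => \sum_(i < n.+1) a i * b (n - i)%N.

Record psl2 := PSl2 { pe : pser; pf : pser; ph : pser }.

Definition psl2_add (x y : psl2) : psl2 :=
  PSl2 (padd (pe x) (pe y)) (padd (pf x) (pf y)) (padd (ph x) (ph y)).
Definition psl2_opp (x : psl2) : psl2 := PSl2 (popp (pe x)) (popp (pf x)) (popp (ph x)).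
Definition psl2_sub (x y : psl2) : psl2 := psl2_add x (psl2_opp y).
Definition psl2_scale (c : K) (x : psl2) : psl2 :=
  PSl2 (pscale c (pe x)) (pscale c (pf x)) (pscale c (ph x)).
Definition psl2_br (x y : psl2) : psl2 :=
  PSl2 (pscale 2 (padd (pmul (ph x) (pe y)) (popp (pmul (pe x) (ph y)))))
       (pscale 2 (padd (pmul (pf x) (ph y)) (popp (pmul (ph x) (pf y)))))
       (padd (pmul (pe x) (pf y)) (popp (pmul (pf x) (pe y)))).

Definition sl2ll (z : psl2) : Prop :=
  forall n : nat,
    (odd n -> ph z n = 0) /\ (~~ odd n -> pe z n = 0 /\ pf z n = 0).
Definition sl2llL (L : nat) (z : psl2) : Prop :=
  sl2ll z /\ forall n : nat, (n < L)%N -> [/\ pe z n = 0, pf z n = 0 & ph z n = 0].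

End OnsagerDefs.

Definition Cx (R : realType) : fieldType := R[i].

From mathcomp Require Import all_boot all_order all_algebra.
From mathcomp Require Import finmap zify ring.
From Stdlib Require Import FunctionalExtensionality.

Set Implicit Arguments.
Unset Strict Implicit.
Unset Printing Implicit Defensive.

Import Order.TTheory GRing.Theory Num.Theory.
Local Open Scope ring_scope.

(* The substitution t = (1 + lambda) / (1 - lambda) expands every Laurent
   polynomial into a power series in lambda; it turns t |-> t^-1 into
   lambda |-> -lambda and t - 1 into 2 lambda / (1 - lambda), a unit multiple of
   lambda.  Hence (when 2 is invertible) a Laurent polynomial is divisible by
   (t - 1)^L exactly when its expansion vanishes modulo lambda^L, and every
   truncated power series is the expansion of some Laurent polynomial.
   The Onsager algebra is the fixed algebra of x(t) |-> w(x(t^-1)), w the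
   Chevalley involution; conjugated by the automorphism h |-> e + f of sl2 used
   below, w becomes e, f |-> -e, -f, h |-> h, so after the substitution the fixed
   algebra is the parity-graded algebra sl2<<lambda>>.  Reading off the n-th
   coefficient at level n + 1 of a compatible family gives the isomorphism of
   the completion. *)

Section LaurentCoefficients.
Variable K : fieldType.
Local Notation laurent := (laurent K).

Lemma finsupp_fsfun_sub (S : {fset int}) (h : int -> K) :
  (finsupp ([fsfun n in S => h n | 0] : laurent) `<=` S)%fset.
Proof.
apply/fsubsetP => x; rewrite mem_finsupp fsfun_fun.
by case: ifP => //; rewrite eqxx.
Qed.

Lemma fsfun_inE (S : {fset int}) (h : int -> K) n :
  (n \notin S -> h n = 0) -> ([fsfun n in S => h n | 0] : laurent) n = h n.
Proof. by rewrite fsfun_fun; case: ifP => // _ ->. Qed.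

Lemma laddE (a b : laurent) n : ladd a b n = a n + b n.
Proof.
apply: fsfun_inE; rewrite in_fsetU negb_or => /andP[ha hb].
by rewrite !fsfun_dflt // addr0.
Qed.

Lemma loppE (a : laurent) n : lopp a n = - a n.
Proof. by apply: fsfun_inE => /fsfun_dflt ->; rewrite oppr0. Qed.

Lemma lscaleE c (a : laurent) n : lscale c a n = c * a n.
Proof. by apply: fsfun_inE => /fsfun_dflt ->; rewrite mulr0. Qed.

Lemma linvE (a : laurent) n : linv a n = a (- n).
Proof.
apply: fsfun_inE => nS; rewrite fsfun_dflt //; apply: contra nS => an.
by apply/imfsetP; exists (- n); rewrite ?opprK.
Qed.

Lemma lmonoE c k n : (lmono c k : laurent) n = if n == k then c else 0.
Proof. by rewrite fsfun_fun inE. Qed.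

Lemma lmulE (a b : laurent) n :
  lmul a b n = \sum_(i <- finsupp a) a i * b (n - i).
Proof.
apply: fsfun_inE => nS; rewrite big1_fset // => i ia _.
rewrite [b _]fsfun_dflt ?mulr0 //; apply: contra nS => H.
by apply/imfset2P; exists i => //; exists (n - i) => //; rewrite addrC subrK.
Qed.

Lemma big_finsupp_incl (V : nmodType) (a : laurent) (S : {fset int})
    (F : int -> K -> V) :
  (finsupp a `<=` S)%fset -> (forall i, F i 0 = 0) ->
  \sum_(i <- finsupp a) F i (a i) = \sum_(i <- S) F i (a i).
Proof. by move=> sub F0; apply: big_fset_incl => // x _ /fsfun_dflt ->. Qed.

Lemma big_finsupp_shift (V : nmodType) (b : laurent) (S : {fset int}) i
    (G : int -> K -> V) :
  ([fset (i + j)%R | j in finsupp b] `<=` S)%fset -> (forall n, G n 0 = 0) ->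
  \sum_(n <- S) G n (b (n - i)) = \sum_(j <- finsupp b) G (i + j) (b j).
Proof.
move=> sub G0.
transitivity (\sum_(n <- [fset (i + j)%R | j in finsupp b]%fset) G n (b (n - i))).
  apply: esym; apply: big_fset_incl => // n _ nI.
  rewrite fsfun_dflt ?G0 //; apply: contra nI => H.
  by apply/imfsetP; exists (n - i) => //; rewrite addrC subrK.
rewrite big_imfset /=; last by move=> x y _ _ /addrI.
by apply: eq_bigr => j _; rewrite addrC addrK.
Qed.

Lemma lmulA (a b c : laurent) : lmul (lmul a b) c = lmul a (lmul b c).
Proof.
apply/fsfunP => n; rewrite lmulE.
rewrite (big_finsupp_incl (F := fun k x => x * c (n - k)) (finsupp_fsfun_sub _ _));
  last by move=> i; rewrite mul0r.
set S := [fset _ | _ in _, _ in _]%fset.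
transitivity (\sum_(k <- S) \sum_(i <- finsupp a) a i * (b (k - i) * c (n - k))).
  by apply: eq_bigr => k _; rewrite lmulE mulr_suml; apply: eq_bigr => i _; rewrite mulrA.
rewrite exchange_big /= lmulE; apply: eq_big_seq => i ia.
rewrite -mulr_sumr lmulE; congr (_ * _).
rewrite (big_finsupp_shift (G := fun k x => x * c (n - k))); first last.
- by move=> m; rewrite mul0r.
- apply/fsubsetP => m /imfsetP [j /= jb ->].
  by apply/imfset2P; exists i => //; exists j.
by apply: eq_bigr => j _; rewrite opprD addrA.
Qed.

Lemma lone_mul (a : laurent) : lmul (lone K) a = a.
Proof.
apply/fsfunP => n; rewrite lmulE.
rewrite (big_finsupp_incl (F := fun k x => x * a (n - k)) (finsupp_fsfun_sub _ _));
  last by move=> i; rewrite mul0r.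
by rewrite big_seq_fset1 lmonoE eqxx mul1r subr0.
Qed.

Lemma ltm1E k : ltm1 K k = (k == 1)%:R - (k == 0)%:R.
Proof. by rewrite laddE !lmonoE; case: (k == 1); case: (k == 0); rewrite /=; ring. Qed.

Lemma lmul_ltm1E (b : laurent) n : lmul (ltm1 K) b n = b (n - 1) - b n.
Proof.
have sub : (finsupp (ltm1 K) `<=` [fset (1 : int); 0])%fset.
  apply/fsubsetP => k; rewrite mem_finsupp ltm1E !inE.
  by case: (k == 1); case: (k == 0); rewrite //= subrr eqxx.
rewrite lmulE (big_finsupp_incl (F := fun k x => x * b (n - k)) sub);
  last by move=> i; rewrite mul0r.
by rewrite big_fsetU1 ?inE // big_seq_fset1 !ltm1E /= !subr0 sub0r mul1r mulN1r.
Qed.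

End LaurentCoefficients.

Section TruncatedPolynomials.
Variable K : fieldType.
Implicit Types p q r : {poly K}.

Definition eqmodX N p q := forall i, (i < N)%N -> p`_i = q`_i.

Lemma eqmodX_sym N p q : eqmodX N p q -> eqmodX N q p.
Proof. by move=> H i /H. Qed.

Lemma eqmodX_trans N p q r : eqmodX N p q -> eqmodX N q r -> eqmodX N p r.
Proof. by move=> H1 H2 i hi; rewrite H1 // H2. Qed.

Lemma eqmodXZ N c p q : eqmodX N p q -> eqmodX N (c *: p) (c *: q).
Proof. by move=> H i hi; rewrite !coefZ H. Qed.

Lemma eqmodXM N p q p' q' :
  eqmodX N p p' -> eqmodX N q q' -> eqmodX N (p * q) (p' * q').
Proof.
move=> H1 H2 i hi; rewrite !coefM; apply: eq_bigr => [[j /= hj]] _.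
by rewrite H1 ?H2 //; apply: leq_ltn_trans hi; rewrite ?leq_subr // -ltnS.
Qed.

Lemma eqmodXX N p q m : eqmodX N p q -> eqmodX N (p ^+ m) (q ^+ m).
Proof. by move=> H; elim: m => [|m IH] //; rewrite !exprS; apply: eqmodXM. Qed.

Lemma eqmodX_sum N (I : Type) (s : seq I) (F G : I -> {poly K}) :
  (forall i, eqmodX N (F i) (G i)) ->
  eqmodX N (\sum_(i <- s) F i) (\sum_(i <- s) G i).
Proof. by move=> H i hi; rewrite !coef_sum; apply: eq_bigr => j _; apply: H. Qed.

Lemma eqmodX_mulX1 N p q m : eqmodX N p 1 -> eqmodX N (q * p ^+ m) q.
Proof.
move=> H; rewrite -[X in eqmodX _ _ X]mulr1 -(expr1n _ m).
by apply: eqmodXM => //; apply: eqmodXX.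
Qed.

Definition polyNX p := p \Po - 'X.

Lemma coef_polyNX p i : (polyNX p)`_i = (-1) ^+ i * p`_i.
Proof.
elim/poly_ind: p i => [|p c IH] i; first by rewrite /polyNX comp_poly0 !coef0 mulr0.
rewrite /polyNX comp_polyD comp_polyM comp_polyX comp_polyC !coefD coefC mulrN coefN coefMX.
case: i => [|i]; rewrite coefMX /=; first by rewrite oppr0 !add0r expr0 mul1r.
by rewrite IH !addr0 exprS !mulNr mul1r.
Qed.

Lemma polyNXK p : polyNX (polyNX p) = p.
Proof. by apply/polyP => i; rewrite !coef_polyNX mulrA -exprMn mulrNN mulr1 expr1n mul1r. Qed.

Lemma eqmodX_polyNX N p q : eqmodX N p q -> eqmodX N (polyNX p) (polyNX q).
Proof. by move=> H i hi; rewrite !coef_polyNX H. Qed.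

End TruncatedPolynomials.

Section CayleyTransform.
Variable K : fieldType.

Definition geom_poly N : {poly K} := \sum_(i < N) 'X^i.

(* Modulo X^N, [cayley_poly N] is (1 + X) / (1 - X) and its reflection is the
   inverse (1 - X) / (1 + X); they are the images of t and t^-1. *)
Definition cayley_poly N := (1 + 'X) * geom_poly N.

Definition cayley_pow N (k : int) : {poly K} :=
  match k with
  | Posz m => cayley_poly N ^+ m
  | Negz m => polyNX (cayley_poly N) ^+ m.+1
  end.

Lemma coef_geom_poly N i : (geom_poly N)`_i = (i < N)%:R.
Proof.
rewrite coef_sum (eq_bigr (fun j : 'I_N => (i == j)%:R)); last by move=> j _; rewrite coefXn.
case: (ltnP i N) => hi.
  rewrite (bigD1 (Ordinal hi)) //= big1 ?eqxx ?addr0 //.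
  by move=> j /negbTE; rewrite eq_sym -val_eqE /= => ->.
by rewrite big1 // => j _; case: eqP => // e; move: (ltn_ord j); rewrite -e; lia.
Qed.

Lemma cayley_polyNX N : eqmodX N (cayley_poly N * polyNX (cayley_poly N)) 1.
Proof.
have geomB : (1 - 'X) * geom_poly N = 1 - 'X^N.
  rewrite -{2}(expr1n _ N) subrXX; congr (_ * _).
  by apply: eq_bigr => i _; rewrite expr1n mul1r.
have geomNX : (1 + 'X) * polyNX (geom_poly N) = 1 - (- 'X) ^+ N.
  rewrite -{2}(expr1n _ N) subrXX opprK /polyNX rmorph_sum; congr (_ * _).
  by apply: eq_bigr => i _; rewrite expr1n mul1r rmorphXn /= comp_polyX.
have -> : cayley_poly N * polyNX (cayley_poly N)
          = 1 - 'X^N * (1 + (-1) ^+ N - (-1) ^+ N * 'X^N).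
  rewrite /cayley_poly /polyNX rmorphM rmorphD /= rmorph1 comp_polyX -/(polyNX _).
  have -> : (1 + 'X) * geom_poly N * ((1 + - 'X) * polyNX (geom_poly N))
            = ((1 - 'X) * geom_poly N) * ((1 + 'X) * polyNX (geom_poly N)) by ring.
  by rewrite geomB geomNX (exprNn 'X); ring.
by move=> i hi; rewrite coefB coefXnM hi subr0.
Qed.

Lemma eqmodX_cayley_pow N M k : (N <= M)%N -> eqmodX N (cayley_pow N k) (cayley_pow M k).
Proof.
move=> hNM; have geomNM : eqmodX N (geom_poly N) (geom_poly M).
  by move=> i hi; rewrite !coef_geom_poly hi (leq_trans hi).
have cayNM : eqmodX N (cayley_poly N) (cayley_poly M) by apply: eqmodXM.
by case: k => m /=; apply: eqmodXX => //; apply: eqmodX_polyNX.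
Qed.

Lemma cayley_pow_shift N k (B : nat) : 0 <= k + B%:Z ->
  eqmodX N (cayley_pow N k)
    (cayley_poly N ^+ absz (k + B%:Z) * polyNX (cayley_poly N) ^+ B).
Proof.
case: k => m hB; apply/eqmodX_sym.
  have -> : absz (m%:Z + B%:Z) = (m + B)%N by lia.
  by rewrite exprD -mulrA -exprMn; apply/eqmodX_mulX1/cayley_polyNX.
have e : (absz (Negz m + B%:Z)%R + m.+1)%N = B by lia.
rewrite -{2}e exprD mulrA -exprMn mulrC; apply/eqmodX_mulX1/cayley_polyNX.
Qed.

Lemma cayley_powD N i j :
  eqmodX N (cayley_pow N (i + j)) (cayley_pow N i * cayley_pow N j).
Proof.
have h1 := @cayley_pow_shift N (i + j) (absz i + absz j).
have h2 := @cayley_pow_shift N i (absz i).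
have h3 := @cayley_pow_shift N j (absz j).
apply: eqmodX_trans (h1 _) _; first by lia.
apply/eqmodX_sym/(eqmodX_trans (eqmodXM (h2 _) (h3 _))); try lia.
have -> : absz (i + j + (absz i + absz j)%N%:Z)
          = (absz (i + (absz i)%:Z)%R + absz (j + (absz j)%:Z)%R)%N by lia.
by rewrite !exprD mulrACA.
Qed.

Lemma polyNX_cayley_pow N k : polyNX (cayley_pow N k) = cayley_pow N (- k).
Proof.
have polyNX_exp p m : polyNX (p ^+ m) = polyNX p ^+ m by rewrite /polyNX rmorphXn.
by case: k => [[|m]|m] /=; rewrite ?polyNX_exp ?polyNXK.
Qed.

Lemma coef0_cayley_pow N k : (0 < N)%N -> (cayley_pow N k)`_0 = 1.
Proof.
move=> hN; have coef0X (p : {poly K}) m : p`_0 = 1 -> (p ^+ m)`_0 = 1.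
  by move=> hp; elim: m => [|m IH]; rewrite ?coef1 // exprS coef0M hp IH mul1r.
have cay0 : (cayley_poly N)`_0 = 1.
  by rewrite coef0M coef_geom_poly hN coefD coef1 coefX addr0 mulr1.
by case: k => m; apply: coef0X; rewrite // coef_polyNX expr0 mul1r.
Qed.

End CayleyTransform.

Section TaylorExpansion.
Variable K : fieldType.
Local Notation laurent := (laurent K).
Local Notation pser := (pser K).

(* a((1 + X) / (1 - X)) modulo X^N *)
Definition cayley_eval N (a : laurent) : {poly K} :=
  \sum_(k <- finsupp a) a k *: cayley_pow K N k.

Lemma cayley_eval_incl N (a : laurent) (S : {fset int}) :
  (finsupp a `<=` S)%fset -> cayley_eval N a = \sum_(k <- S) a k *: cayley_pow K N k.
Proof.
move=> sub; rewrite /cayley_eval.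
by rewrite (big_finsupp_incl (F := fun k x => x *: cayley_pow K N k) sub) // => i; rewrite scale0r.
Qed.

Lemma cayley_evalD N (a b : laurent) :
  cayley_eval N (ladd a b) = cayley_eval N a + cayley_eval N b.
Proof.
rewrite (cayley_eval_incl N (finsupp_fsfun_sub _ _)).
rewrite (cayley_eval_incl N (fsubsetUl (finsupp a) (finsupp b))).
rewrite (cayley_eval_incl N (fsubsetUr (finsupp a) (finsupp b))) -big_split /=.
by apply: eq_bigr => k _; rewrite laddE scalerDl.
Qed.

Lemma cayley_evalN N (a : laurent) : cayley_eval N (lopp a) = - cayley_eval N a.
Proof.
rewrite (cayley_eval_incl N (finsupp_fsfun_sub _ _)) -sumrN.
by apply: eq_bigr => k _; rewrite loppE scaleNr.
Qed.

Lemma cayley_evalZ N c (a : laurent) : cayley_eval N (lscale c a) = c *: cayley_eval N a.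
Proof.
rewrite (cayley_eval_incl N (finsupp_fsfun_sub _ _)) scaler_sumr.
by apply: eq_bigr => k _; rewrite lscaleE scalerA.
Qed.

Lemma cayley_eval_mono N c k : cayley_eval N (lmono c k) = c *: cayley_pow K N k.
Proof. by rewrite (cayley_eval_incl N (finsupp_fsfun_sub _ _)) big_seq_fset1 lmonoE eqxx. Qed.

Lemma cayley_eval_linv N (a : laurent) : cayley_eval N (linv a) = polyNX (cayley_eval N a).
Proof.
rewrite (cayley_eval_incl N (finsupp_fsfun_sub _ _)).
rewrite big_imfset /=; last by move=> x y _ _ /oppr_inj.
rewrite /polyNX linear_sum; apply: eq_bigr => k _.
by rewrite linvE opprK linearZ /= -polyNX_cayley_pow.
Qed.

Lemma cayley_evalM N (a b : laurent) :
  eqmodX N (cayley_eval N (lmul a b)) (cayley_eval N a * cayley_eval N b).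
Proof.
rewrite (cayley_eval_incl N (finsupp_fsfun_sub _ _)).
set S := [fset _ | _ in _, _ in _]%fset.
have -> : \sum_(n <- S) lmul a b n *: cayley_pow K N n =
          \sum_(i <- finsupp a) a i *: \sum_(j <- finsupp b) b j *: cayley_pow K N (i + j).
  transitivity (\sum_(n <- S) \sum_(i <- finsupp a) a i *: (b (n - i) *: cayley_pow K N n)).
    by apply: eq_bigr => n _; rewrite lmulE scaler_suml; apply: eq_bigr => i _; rewrite scalerA.
  rewrite exchange_big /=; apply: eq_big_seq => i ia; rewrite -scaler_sumr.
  congr (_ *: _).
  apply: (big_finsupp_shift (G := fun n x => x *: cayley_pow K N n)) => [|n]; last first.
    by rewrite scale0r.
  apply/fsubsetP => n /imfsetP [j /= jb ->].
  by apply/imfset2P; exists i => //; exists j.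
rewrite mulr_suml; apply: eqmodX_sum => i; rewrite -scalerAl mulr_sumr.
apply: eqmodXZ; apply: eqmodX_sum => j; rewrite -scalerAr; apply: eqmodXZ.
exact: cayley_powD.
Qed.

Lemma eqmodX_cayley_eval N M (a : laurent) :
  (N <= M)%N -> eqmodX N (cayley_eval N a) (cayley_eval M a).
Proof. by move=> h; apply: eqmodX_sum => k; apply/eqmodXZ/eqmodX_cayley_pow. Qed.

Definition taylor (a : laurent) : pser := fun n => (cayley_eval n.+1 a)`_n.

Lemma taylorE N (a : laurent) n : (n < N)%N -> taylor a n = (cayley_eval N a)`_n.
Proof. by move=> h; rewrite /taylor (eqmodX_cayley_eval a h). Qed.

Lemma taylorD (a b : laurent) : taylor (ladd a b) = padd (taylor a) (taylor b).
Proof. by apply: functional_extensionality => n; rewrite /taylor cayley_evalD coefD. Qed.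

Lemma taylorN (a : laurent) : taylor (lopp a) = popp (taylor a).
Proof. by apply: functional_extensionality => n; rewrite /taylor cayley_evalN coefN. Qed.

Lemma taylorZ c (a : laurent) : taylor (lscale c a) = pscale c (taylor a).
Proof. by apply: functional_extensionality => n; rewrite /taylor cayley_evalZ coefZ. Qed.

Lemma taylor_linv (a : laurent) n : taylor (linv a) n = (-1) ^+ n * taylor a n.
Proof. by rewrite /taylor cayley_eval_linv coef_polyNX. Qed.

Lemma taylorM (a b : laurent) : taylor (lmul a b) = pmul (taylor a) (taylor b).
Proof.
apply: functional_extensionality => n; rewrite /taylor (cayley_evalM a b) // coefM.
by apply: eq_bigr => [[i hi]] _ /=; rewrite -!taylorE //; lia.
Qed.

Lemma taylor0 (a : laurent) : taylor a 0 = \sum_(k <- finsupp a) a k.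
Proof.
rewrite /taylor /cayley_eval coef_sum; apply: eq_bigr => k _.
by rewrite coefZ coef0_cayley_pow // mulr1.
Qed.

Lemma taylor_lone n : taylor (lone K) n = (n == 0)%:R.
Proof. by rewrite /taylor cayley_eval_mono /= expr0 coefZ mul1r coef1. Qed.

Lemma taylor_ltm1 n : taylor (ltm1 K) n = if n == 0 then 0 else 2.
Proof.
rewrite /taylor cayley_evalD !cayley_eval_mono /= expr1 expr0 coefD !coefZ coef1.
rewrite /cayley_poly mulrDl mul1r coefD coefXM !coef_geom_poly mul1r.
by case: n => [|n] /=; rewrite ?ltnS ?leqnn ?leqnSn /=; ring.
Qed.

End TaylorExpansion.

Section PowerSeriesProduct.
Variable K : fieldType.
Implicit Types u v w : pser K.

Lemma pmul_ext u v u' v' n : (forall i, (i <= n)%N -> u i = u' i) ->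
  (forall i, (i <= n)%N -> v i = v' i) -> pmul u v n = pmul u' v' n.
Proof.
move=> H1 H2; rewrite /pmul; apply: eq_bigr => [[i hi]] _ /=.
by rewrite H1 // H2 // leq_subr.
Qed.

Lemma pmul_vanish u v A B : (forall i, (i < A)%N -> u i = 0) ->
  (forall j, (j < B)%N -> v j = 0) -> forall n, (n < A + B)%N -> pmul u v n = 0.
Proof.
move=> H1 H2 n hn; rewrite /pmul big1 // => [[i hi]] _ /=.
case: (ltnP i A) => hiA; first by rewrite H1 ?mul0r.
by rewrite H2 ?mulr0 //; lia.
Qed.

Lemma pmul_shift u v n : u 0%N = 0 -> (forall j, (j < n)%N -> v j = 0) ->
  pmul u v n.+1 = u 1%N * v n.
Proof.
move=> u0 hv; rewrite /pmul big_ord_recl u0 mul0r add0r big_ord_recl /=.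
rewrite big1 ?addr0 => [|[i hi] _ /=]; last by rewrite hv ?mulr0 // /bump /=; lia.
by rewrite /bump /= subSS subn0.
Qed.

Lemma pmulDl u v w : pmul (padd u v) w = padd (pmul u w) (pmul v w).
Proof.
apply: functional_extensionality => n.
by rewrite /pmul /padd -big_split; apply: eq_bigr => i _; apply: mulrDl.
Qed.

Lemma pmulDr u v w : pmul w (padd u v) = padd (pmul w u) (pmul w v).
Proof.
apply: functional_extensionality => n.
by rewrite /pmul /padd -big_split; apply: eq_bigr => i _; apply: mulrDr.
Qed.

Lemma pmulNl u w : pmul (popp u) w = popp (pmul u w).
Proof.
apply: functional_extensionality => n.
by rewrite /pmul /popp -sumrN; apply: eq_bigr => i _; apply: mulNr.
Qed.

Lemma pmulNr u w : pmul w (popp u) = popp (pmul w u).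
Proof.
apply: functional_extensionality => n.
by rewrite /pmul /popp -sumrN; apply: eq_bigr => i _; apply: mulrN.
Qed.

Lemma pmulZl c u w : pmul (pscale c u) w = pscale c (pmul u w).
Proof.
apply: functional_extensionality => n.
by rewrite /pmul /pscale mulr_sumr; apply: eq_bigr => i _; rewrite mulrA.
Qed.

Lemma pmulZr c u w : pmul w (pscale c u) = pscale c (pmul w u).
Proof.
apply: functional_extensionality => n.
by rewrite /pmul /pscale mulr_sumr; apply: eq_bigr => i _; rewrite mulrCA.
Qed.

End PowerSeriesProduct.

Section DivisibilityByTminus1.
Variable K : fieldType.
Local Notation laurent := (laurent K).
Local Notation pser := (pser K).

Lemma taylor_ltm1_pow L n :
  (n <= L)%N -> taylor (lpow (ltm1 K) L) n = (n == L)%:R * 2 ^+ L.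
Proof.
elim: L n => [|L IH] [|n] //; rewrite ?ltnS => hn.
- by rewrite taylor_lone mul1r.
- by rewrite [lpow _ _]/= taylorM /pmul big_ord1 taylor_ltm1 mul0r mul0r.
rewrite [lpow _ _]/= taylorM pmul_shift ?taylor_ltm1 // => [|j hj]; last first.
  by rewrite IH ?(ltn_eqF (leq_trans hj hn)) ?mul0r //; lia.
by rewrite IH // eqSS exprS; case: (n == L); rewrite /= ?mul1r ?mul0r ?mulr0.
Qed.

Lemma laurent_of_bounded (f : int -> K) (B : nat) :
  (forall n, B%:Z < `|n| -> f n = 0) -> exists b : laurent, forall n, b n = f n.
Proof.
move=> fB; exists [fsfun n in [fset (i%:Z - B%:Z)%R | i in iota 0 (B + B).+1]%fset => f n | 0].
move=> n; apply: fsfun_inE => nD; apply: fB; rewrite ltNge; apply: contra nD => hn.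
apply/imfsetP; exists (absz (n + B%:Z)); last by lia.
by rewrite mem_iota; lia.
Qed.

(* If the coefficients of a sum to 0, then a = (t - 1) b, where b(n) is the
   sum of the coefficients of a beyond n. *)
Lemma dvd_ltm1 (a : laurent) : \sum_(k <- finsupp a) a k = 0 ->
  exists b : laurent, a = lmul (ltm1 K) b.
Proof.
move=> a_sum0; pose B := (\sum_(j <- finsupp a) absz j)%N.
have suppB k : k \in finsupp a -> (absz k <= B)%N.
  by move=> ka; rewrite /B (bigD1_seq k) /= ?fset_uniq //; lia.
pose tail n := \sum_(k <- finsupp a | n < k) a k.
have [b bE] : exists b : laurent, forall n, b n = tail n.
  apply: (@laurent_of_bounded _ B) => n hn.
  case: (lerP n 0) => hn0; last first.
    by rewrite /tail big1_seq // => k /andP [hk /suppB]; lia.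
  rewrite -a_sum0 /tail big_seq_cond [RHS]big_seq_cond; apply: eq_bigl => k.
  by case: (boolP (k \in finsupp a)) => //= /suppB; lia.
exists b; apply/fsfunP => n; rewrite lmul_ltm1E !bE /tail (bigID (fun k => k == n)) /=.
have -> : \sum_(k <- finsupp a | (n - 1 < k) && (k != n)) a k = tail n.
  by apply: eq_bigl => k; apply/idP/idP; lia.
rewrite addrK -big_filter.
have [an | an] := boolP (n \in finsupp a).
  rewrite (_ : [seq _ <- _ | _] = [:: n]) ?big_seq1 //.
  by rewrite (eq_filter (a2 := pred1 n)) ?filter_pred1_uniq // => k /=; apply/idP/idP; lia.
rewrite (fsfun_dflt an) big1_seq // => k /andP [_].
by rewrite mem_filter; case: (k =P n) => [->|]; rewrite ?(negbTE an) ?andbF.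
Qed.

Hypothesis two_neq0 : (2 : K) != 0.

Lemma taylor_vanish_dvd L (a : laurent) :
  (forall n, (n < L)%N -> taylor a n = 0) <-> exists r, a = lmul (lpow (ltm1 K) L) r.
Proof.
split; last first.
  move=> [r ->] n hn; rewrite taylorM (@pmul_vanish _ _ _ L 0) ?addn0 // => i hi.
  by rewrite taylor_ltm1_pow ?ltn_eqF ?mul0r // ltnW.
elim: L a => [|L IH] a ha; first by exists a; rewrite lone_mul.
have [a' ea] := dvd_ltm1 (etrans (esym (taylor0 a)) (ha 0%N isT)).
have ha' n : (n < L)%N -> taylor a' n = 0.
  elim/ltn_ind: n => n IHn hn.
  have := ha n.+1 hn; rewrite ea taylorM pmul_shift ?taylor_ltm1 => [|//|j hj]; last first.
    by apply: IHn => //; lia.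
  by move/eqP; rewrite mulf_eq0 (negbTE two_neq0) => /eqP.
have [r er] := IH a' ha'.
by exists r; rewrite ea er -lmulA.
Qed.

(* The expansion of (t - 1)^L is 2^L lambda^L + ..., so adding a multiple of it
   corrects the L-th coefficient without disturbing the lower ones. *)
Fixpoint taylor_approx (s : pser) L : laurent :=
  if L is L'.+1 then
    let a := taylor_approx s L' in
    ladd a (lscale ((s L' - taylor a L') / 2 ^+ L') (lpow (ltm1 K) L'))
  else lmono 0 0.

Lemma taylor_approxE (s : pser) L n : (n < L)%N -> taylor (taylor_approx s L) n = s n.
Proof.
elim: L => // L IH; rewrite ltnS leq_eqVlt => /orP[/eqP -> | hn] /=;
  rewrite taylorD taylorZ /padd /pscale taylor_ltm1_pow ?(ltnW hn) //.
  by rewrite eqxx mul1r divfK ?subrKC ?expf_neq0.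
by rewrite ltn_eqF // mul0r mulr0 addr0 IH.
Qed.

End DivisibilityByTminus1.

Section PowerSeriesSl2.
Variable K : fieldType.
Implicit Types a b : psl2 K.

Definition psl2_coef a n : K * K * K := (pe a n, pf a n, ph a n).

Definition agree_below L a b := forall n, (n < L)%N -> psl2_coef a n = psl2_coef b n.

Lemma psl2_coef_inj a b : (forall n, psl2_coef a n = psl2_coef b n) -> a = b.
Proof.
case: a b => ae af ah [be bf bh] H; rewrite /psl2_coef /= in H.
by congr PSl2; apply: functional_extensionality => n; case: (H n).
Qed.

Lemma agree_below_all a b : (forall L, agree_below L a b) -> a = b.
Proof. by move=> H; apply: psl2_coef_inj => n; apply: (H n.+1). Qed.

Lemma agree_below_sym L a b : agree_below L a b -> agree_below L b a.
Proof. by move=> H n /H. Qed.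

Lemma agree_below_trans L a b c :
  agree_below L a b -> agree_below L b c -> agree_below L a c.
Proof. by move=> H1 H2 n hn; rewrite H1 // H2. Qed.

Lemma agree_below_le L M a b : (L <= M)%N -> agree_below M a b -> agree_below L a b.
Proof. by move=> hLM H n hn; apply/H/(leq_trans hn). Qed.

Lemma agree_below_br L a a' b b' : agree_below L a a' -> agree_below L b b' ->
  agree_below L (psl2_br a b) (psl2_br a' b').
Proof.
move=> Ha Hb n hn.
have coefs c c' : agree_below L c c' -> forall i, (i <= n)%N ->
    [/\ pe c i = pe c' i, pf c i = pf c' i & ph c i = ph c' i].
  by move=> H i hi; case: (H i (leq_ltn_trans hi hn)).
rewrite /psl2_coef /= /pscale /padd /popp.
congr (2 * (_ - _), 2 * (_ - _), _ - _); apply: pmul_ext => i hi;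
  by [case: (coefs _ _ Ha i hi) | case: (coefs _ _ Hb i hi)].
Qed.

Lemma sl2ll_sub a b : sl2ll a -> sl2ll b -> sl2ll (psl2_sub a b).
Proof.
move=> ha hb n; have [ha1 ha2] := ha n; have [hb1 hb2] := hb n.
split=> hn; rewrite /= /padd /popp; first by rewrite ha1 // hb1 // subrr.
by have [-> ->] := ha2 hn; have [-> ->] := hb2 hn; rewrite subrr.
Qed.

Lemma sl2llLE L a :
  sl2llL L a <-> sl2ll a /\ forall n, (n < L)%N -> psl2_coef a n = 0.
Proof.
rewrite /sl2llL /psl2_coef; split=> -[ha H]; split=> // n /H; first by case=> -> -> ->.
by case=> -> -> ->.
Qed.

Lemma psl2_coef_sub a b n : psl2_coef (psl2_sub a b) n = psl2_coef a n - psl2_coef b n.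
Proof. by []. Qed.

Lemma sl2llL_subP L a b : sl2ll a -> sl2ll b ->
  sl2llL L (psl2_sub a b) <-> agree_below L a b.
Proof.
move=> ha hb; rewrite sl2llLE; split=> [[_ H] n /H | H].
  by rewrite psl2_coef_sub => /eqP; rewrite subr_eq0 => /eqP.
by split=> [|n /H /eqP]; [apply: sl2ll_sub | rewrite -subr_eq0 psl2_coef_sub => /eqP].
Qed.

Lemma sl2llL_subrr L a : sl2llL L (psl2_sub a a).
Proof. by split=> n; rewrite /= /padd /popp !subrr. Qed.

Lemma sl2llL_agree_below L a b : agree_below L a b -> sl2ll a -> sl2ll b ->
  sl2llL L a <-> sl2llL L b.
Proof.
move=> hab ha hb; rewrite !sl2llLE.
split=> -[_ H]; split=> // n hn; first by rewrite -(hab n hn) H.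
by rewrite (hab n hn) H.
Qed.

End PowerSeriesSl2.

Section LoopToPowerSeries.
Variable K : fieldType.
Hypothesis two_neq0 : (2 : K) != 0.

Definition loop_taylor (x : loop K) : psl2 K :=
  PSl2 (taylor (le x)) (taylor (lf x)) (taylor (lh x)).

(* The automorphism of sl2 with h |-> e + f, e |-> (h - e + f) / 2 and
   f |-> (h + e - f) / 2, acting on coefficients. *)
Definition sl2_twist (z : psl2 K) : psl2 K :=
  PSl2 (padd (ph z) (popp (pscale 2^-1 (padd (pe z) (popp (pf z))))))
       (padd (ph z) (pscale 2^-1 (padd (pe z) (popp (pf z)))))
       (pscale 2^-1 (padd (pe z) (pf z))).

Definition loop_phi (x : loop K) : psl2 K := sl2_twist (loop_taylor x).

Lemma loop_phiE x n : psl2_coef (loop_phi x) n =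
  (taylor (lh x) n - 2^-1 * (taylor (le x) n - taylor (lf x) n),
   taylor (lh x) n + 2^-1 * (taylor (le x) n - taylor (lf x) n),
   2^-1 * (taylor (le x) n + taylor (lf x) n)).
Proof. by []. Qed.

Lemma loop_phi_lin c x y :
  loop_phi (loop_add (loop_scale c x) y) = psl2_add (psl2_scale c (loop_phi x)) (loop_phi y).
Proof.
apply: psl2_coef_inj => n; rewrite loop_phiE /= !taylorD !taylorZ.
by rewrite /psl2_coef /= /padd /popp /pscale; congr (_, _, _); ring.
Qed.

Lemma loop_phi_sub x y : loop_phi (loop_sub x y) = psl2_sub (loop_phi x) (loop_phi y).
Proof.
apply: psl2_coef_inj => n; rewrite loop_phiE /= !taylorD !taylorN.
by rewrite /psl2_coef /= /padd /popp /pscale; congr (_, _, _); ring.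
Qed.

Lemma loop_taylor_br x y : loop_taylor (loop_br x y) = psl2_br (loop_taylor x) (loop_taylor y).
Proof. by rewrite /loop_taylor /= !taylorZ !taylorD !taylorN !taylorM. Qed.

Lemma sl2_twist_br a b : sl2_twist (psl2_br a b) = psl2_br (sl2_twist a) (sl2_twist b).
Proof.
rewrite /sl2_twist /psl2_br /=.
rewrite !(pmulDl, pmulDr, pmulNl, pmulNr, pmulZl, pmulZr).
by congr PSl2; apply: functional_extensionality => n; rewrite /padd /popp /pscale; field.
Qed.

Lemma loop_phi_br x y : loop_phi (loop_br x y) = psl2_br (loop_phi x) (loop_phi y).
Proof. by rewrite /loop_phi loop_taylor_br sl2_twist_br. Qed.

End LoopToPowerSeries.

Section OnsagerToPowerSeries.
Variable K : fieldType.
Hypothesis two_neq0 : (2 : K) != 0.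
Local Notation laurent := (laurent K).

Lemma double_eq0 (c : K) : c + c = 0 -> c = 0.
Proof. by rewrite -mulr2n -mulr_natr => /eqP; rewrite mulf_eq0 (negbTE two_neq0) orbF => /eqP. Qed.

Lemma taylor_antisym_even (q : laurent) n :
  linv q = lopp q -> ~~ odd n -> taylor q n = 0.
Proof.
move=> hq hn; apply: double_eq0; have := taylor_linv q n.
by rewrite hq taylorN /popp -signr_odd (negbTE hn) mul1r => {1}<-; rewrite addNr.
Qed.

Lemma loop_phi_OA (p q : laurent) n : linv q = lopp q ->
  psl2_coef (loop_phi (Loop p (linv p) q)) n =
  if odd n then (taylor q n - taylor p n, taylor q n + taylor p n, 0)
  else (0, 0, taylor p n).
Proof.
move=> hq; rewrite loop_phiE /= taylor_linv -signr_odd.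
case: ifP => hn; first by congr (_, _, _); field.
by rewrite (taylor_antisym_even hq) ?hn //; congr (_, _, _); field.
Qed.

Lemma OA_loop_phi (x : loop K) : OA x -> sl2ll (loop_phi x).
Proof.
move=> [p [q [hq ->]]] n; move: (@loop_phi_OA p q n hq); rewrite /psl2_coef /=.
by case: ifP => hn [-> -> ->].
Qed.

Lemma loop_phi_OA_eq0 (p q : laurent) n : linv q = lopp q ->
  psl2_coef (loop_phi (Loop p (linv p) q)) n = 0 <-> taylor p n = 0 /\ taylor q n = 0.
Proof.
move=> hq; rewrite loop_phi_OA // -[0 : K * K * K]/(0, 0, 0); case: ifP => hn; last first.
  by rewrite (taylor_antisym_even hq) ?hn //; split=> [[->] | [->]].
split=> [[/eqP + sum0] | [-> ->]]; last by rewrite subr0 addr0.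
rewrite subr_eq0 => /eqP eq_qp; move: sum0; rewrite eq_qp.
by move=> /double_eq0 ->.
Qed.

Lemma OA_sub (x y : loop K) : OA x -> OA y -> OA (loop_sub x y).
Proof.
move=> [p [q [hq ->]]] [p' [q' [hq' ->]]].
exists (ladd p (lopp p')), (ladd q (lopp q')); split.
  apply/fsfunP => n; rewrite linvE !loppE !laddE !loppE -!linvE hq hq' !loppE.
  by rewrite opprD.
by congr Loop; apply/fsfunP => n; rewrite linvE !laddE !loppE !linvE.
Qed.

Lemma OA_ideal_loop_phi L (w : loop K) : OA w -> OA_ideal L w <-> sl2llL L (loop_phi w).
Proof.
move=> [p [q [hq ->]]]; rewrite sl2llLE.
have -> : OA_ideal L (Loop p (linv p) q) <->
    (exists r, p = lmul (lpow (ltm1 K) L) r) /\ exists s, q = lmul (lpow (ltm1 K) L) s.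
  split=> [[p' [q' [_ [-> _ ->] hr hs]]] // | [hr hs]].
  by exists p, q; split.
rewrite -!taylor_vanish_dvd //; split=> [[hp hq'] | [_ H]].
  split=> [|n hn]; first by apply: OA_loop_phi; exists p, q.
  by apply/loop_phi_OA_eq0 => //; split; [apply: hp | apply: hq'].
by split=> n /H /loop_phi_OA_eq0 => -[].
Qed.

Lemma OA_ideal_agree_below L (x y : loop K) : OA x -> OA y ->
  OA_ideal L (loop_sub x y) <-> agree_below L (loop_phi x) (loop_phi y).
Proof.
move=> hx hy; rewrite OA_ideal_loop_phi ?loop_phi_sub; last exact: OA_sub.
by apply: sl2llL_subP; apply: OA_loop_phi.
Qed.

(* A preimage of z modulo lambda^L: the even coefficients of p give the h-part,
   the odd ones of p and of the antisymmetrised q give the e- and f-parts. *)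
Definition phi_approx (z : psl2 K) L : loop K :=
  let p := taylor_approx (fun n => if odd n then 2^-1 * (pf z n - pe z n) else ph z n) L in
  let q := taylor_approx (fun n => 2^-1 * (pe z n + pf z n)) L in
  Loop p (linv p) (lscale 2^-1 (ladd q (lopp (linv q)))).

Lemma OA_phi_approx z L : OA (phi_approx z L).
Proof.
do 2 eexists; split; last by [].
apply/fsfunP => n; rewrite linvE !lscaleE !laddE !loppE !linvE opprK.
by rewrite lscaleE laddE loppE linvE; ring.
Qed.

Lemma phi_approx_agree_below z L : sl2ll z -> agree_below L (loop_phi (phi_approx z L)) z.
Proof.
move=> hz n hn; rewrite loop_phi_OA; last first.
  apply/fsfunP => k; rewrite linvE !lscaleE !laddE !loppE !linvE opprK.
  by rewrite lscaleE laddE loppE linvE; ring.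
rewrite taylorZ taylorD taylorN /pscale /padd /popp taylor_linv !taylor_approxE //.
rewrite /psl2_coef -signr_odd; have [hz_odd hz_even] := hz n.
case: ifP => hodd; rewrite hodd /=; first by rewrite hz_odd //; congr (_, _, _); field.
by have [-> ->] := hz_even (negbT hodd); congr (_, _, _); field.
Qed.

End OnsagerToPowerSeries.

Section Completion.
Variable K : fieldType.
Hypothesis two_neq0 : (2 : K) != 0.

(* Level n.+1 is the first level of the family that determines the n-th coefficient. *)
Definition hat_phi (X : nat -> loop K) : psl2 K :=
  PSl2 (fun n => pe (loop_phi (X n.+1)) n) (fun n => pf (loop_phi (X n.+1)) n)
       (fun n => ph (loop_phi (X n.+1)) n).

Lemma hat_phi_agree_below L (X : nat -> loop K) :
  hatOA X -> agree_below L (hat_phi X) (loop_phi (X L)).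
Proof.
case=> hO hc n hn.
have := (OA_ideal_agree_below two_neq0 n.+1 (hO L) (hO n.+1)).1 (hc n.+1 L hn).
by move=> /(_ n (ltnSn n)) ->.
Qed.

Lemma hat_phi_sl2ll (X : nat -> loop K) : hatOA X -> sl2ll (hat_phi X).
Proof. by case=> hO _ n; apply: (OA_loop_phi two_neq0 (hO n.+1) n). Qed.

Lemma hat_phi_inj (x y : nat -> loop K) :
  hatOA x -> hatOA y -> hat_phi x = hat_phi y <-> hat_eq x y.
Proof.
move=> hx hy; split=> [exy L | hxy].
  apply/(OA_ideal_agree_below two_neq0 L (hx.1 L) (hy.1 L)).
  apply: agree_below_trans (agree_below_sym (hat_phi_agree_below (L := L) hx)) _.
  by rewrite exy; apply: hat_phi_agree_below.
apply: agree_below_all => L.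
apply: agree_below_trans (hat_phi_agree_below (L := L) hx) _.
apply: agree_below_trans _ (agree_below_sym (hat_phi_agree_below (L := L) hy)).
exact/(OA_ideal_agree_below two_neq0 L (hx.1 L) (hy.1 L)).
Qed.

Lemma hatOA_phi_approx (z : psl2 K) : sl2ll z -> hatOA (phi_approx z).
Proof.
move=> hz; split=> [L | M L hML]; first exact: OA_phi_approx.
apply/(OA_ideal_agree_below two_neq0 M (OA_phi_approx _ _) (OA_phi_approx _ _)).
apply: agree_below_trans (agree_below_le hML (phi_approx_agree_below two_neq0 (L := L) hz)) _.
exact/agree_below_sym/phi_approx_agree_below.
Qed.

Lemma hat_phi_approx (z : psl2 K) : sl2ll z -> hat_phi (phi_approx z) = z.
Proof.
move=> hz; apply: agree_below_all => L.
exact: agree_below_trans (hat_phi_agree_below (L := L) (hatOA_phi_approx hz))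
                         (phi_approx_agree_below two_neq0 (L := L) hz).
Qed.

Lemma hat_phi_lin c (x y : nat -> loop K) :
  hat_phi (hat_add (hat_scale c x) y) = psl2_add (psl2_scale c (hat_phi x)) (hat_phi y).
Proof.
apply: psl2_coef_inj => n.
exact (congr1 (fun a => psl2_coef a n) (@loop_phi_lin K c (x n.+1) (y n.+1))).
Qed.

Lemma hat_phi_br (x y : nat -> loop K) : hatOA x -> hatOA y ->
  hat_phi (hat_br x y) = psl2_br (hat_phi x) (hat_phi y).
Proof.
move=> hx hy; apply: psl2_coef_inj => n.
have Hx := hat_phi_agree_below (L := n.+1) hx.
have Hy := hat_phi_agree_below (L := n.+1) hy.
by rewrite (agree_below_br Hx Hy) // -loop_phi_br.
Qed.

Lemma hat_phi_ker L (x : nat -> loop K) : hatOA x -> ker_psi L x <-> sl2llL L (hat_phi x).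
Proof.
move=> hx; rewrite /ker_psi (OA_ideal_loop_phi two_neq0 L (hx.1 L)); apply: iff_sym.
apply: sl2llL_agree_below (hat_phi_agree_below (L := L) hx) _ _; first exact: hat_phi_sl2ll.
exact (OA_loop_phi two_neq0 (hx.1 L)).
Qed.

End Completion.

Theorem theorem5 (R : realType) :
  exists Phi : (nat -> loop (Cx R)) -> psl2 (Cx R),
    (forall x, hatOA x -> sl2ll (Phi x)) /\
    (forall x y, hatOA x -> hatOA y -> (Phi x = Phi y <-> hat_eq x y)) /\
    (forall z, sl2ll z -> exists x, hatOA x /\ Phi x = z) /\
    (forall (c : Cx R) x y, hatOA x -> hatOA y ->
       Phi (hat_add (hat_scale c x) y) = psl2_add (psl2_scale c (Phi x)) (Phi y)) /\
    (forall x y, hatOA x -> hatOA y ->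
       Phi (hat_br x y) = psl2_br (Phi x) (Phi y)) /\
    (forall (L : nat) x, hatOA x -> (ker_psi L x <-> sl2llL L (Phi x))) /\
    (forall L : nat, exists phi : loop (Cx R) -> psl2 (Cx R),
       (forall x, OA x -> sl2ll (phi x)) /\
           (forall x, hatOA x -> sl2llL L (psl2_sub (Phi x) (phi (x L)))) /\
           (forall x y, OA x -> OA y ->
              (sl2llL L (psl2_sub (phi x) (phi y)) <-> OA_ideal L (loop_sub x y))) /\
           (forall z, sl2ll z -> exists x, OA x /\ sl2llL L (psl2_sub z (phi x))) /\
           (forall (c : Cx R) x y, OA x -> OA y ->
              sl2llL L (psl2_sub (phi (loop_add (loop_scale c x) y))
                                 (psl2_add (psl2_scale c (phi x)) (phi y)))) /\
           (forall x y, OA x -> OA y ->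
              sl2llL L (psl2_sub (phi (loop_br x y)) (psl2_br (phi x) (phi y))))).
Proof.
have two_neq0 : (2 : Cx R) != 0 by rewrite /Cx pnatr_eq0.
have OA_phi := OA_loop_phi two_neq0.
exists (@hat_phi (Cx R)); split; first exact: hat_phi_sl2ll.
split; first exact: hat_phi_inj.
split.
  by move=> z hz; exists (phi_approx z); split; [exact: hatOA_phi_approx | exact: hat_phi_approx].
split; first by move=> c x y _ _; apply: hat_phi_lin.
split; first exact: hat_phi_br.
split; first exact: hat_phi_ker.
move=> L; exists (loop_phi (K := Cx R)); split; first exact: OA_phi.
split.
  move=> x hx; apply/sl2llL_subP; [exact: hat_phi_sl2ll | exact: OA_phi (hx.1 L) |].
  exact: hat_phi_agree_below.
split.
  by move=> x y hx hy; rewrite -loop_phi_sub (OA_ideal_loop_phi two_neq0 L (OA_sub hx hy)).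
split.
  move=> z hz; exists (phi_approx z L); split; first exact: OA_phi_approx.
  apply/sl2llL_subP; [exact: hz | exact: OA_phi (OA_phi_approx z L) |].
  exact/agree_below_sym/phi_approx_agree_below.
split; first by move=> c x y _ _; rewrite loop_phi_lin; apply: sl2llL_subrr.
by move=> x y _ _; rewrite (loop_phi_br two_neq0); apply: sl2llL_subrr.
Qed.
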